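(* Let $n\ge 2$ and $d\ge 2$. For every biseparable state $\rho$ on $(\mathbb{C}^d)^{\otimes n}$, $$\mathcal{C}_{\frac{n}{2}+1}(\rho)=\sum_{\alpha\neq\emptyset,\ |\alpha|\ge \frac n2+1}\|\tau_\alpha(\rho)\|^2\le d^n-d.$$
   Context: Consider $n$ qudits with Hilbert space $(\mathbb{C}^d)^{\otimes n}$. Let $\lambda_0=\mathbb{1}_d$ and let $\lambda_1,\dots,\lambda_{d^2-1}$ be Hermitian traceless $d\times d$ matrices normalized so that $\mathrm{Tr}[\lambda_i\lambda_j]=d\,\delta_{ij}$. For a nonempty subset $\alpha\subseteq\{1,\dots,n\}$ and a state $\rho$ with reduced state $\rho_\alpha$, define $\|\tau_\alpha(\rho)\|^2=\sum_{(i_k)_{k\in\alpha}\in\{1,\dots,d^2-1\}^{\alpha}}\big(\mathrm{Tr}[\rho_\alpha\bigotimes_{k\in\alpha}\lambda_{i_k}]\big)^2$. For real $x$, $\mathcal{C}_x(\rho)=\sum_{\alpha\neq\emptyset,\ |\alpha|\ge x}\|\tau_\alpha(\rho)\|^2$. A state is biseparable if it is a convex combination of pure states each of which is a product $|\phi\rangle_\beta\otimes|\chi\rangle_{\overline{\beta}}$ for some bipartition $\{1,\dots,n\}=\beta\,\dot\cup\,\overline\beta$ into nonempty sets (the bipartition may differ between terms). *)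

From HB Require Import structures.
From mathcomp Require Import all_boot all_order all_algebra.
From mathcomp Require Import complex.
Set Implicit Arguments. Unset Strict Implicit. Unset Printing Implicit Defensive.
Import Order.TTheory GRing.Theory Num.Theory.
Local Open Scope ring_scope.

(* computational basis labels of (C^d)^{⊗n}: functions {1..n} -> {0..d-1} *)
Definition Idx (n d : nat) := {ffun 'I_n -> 'I_d}.
Definition Conf (n d : nat) (A : {set 'I_n}) := {ffun {k : 'I_n | k \in A} -> 'I_d}.

Lemma in_setC_of_false (n : nat) (A : {set 'I_n}) (k : 'I_n) :
  k \in A = false -> k \in ~: A.
Proof. by rewrite in_setC => ->. Qed.

Definition glue (n d : nat) (A : {set 'I_n}) (x : Conf d A) (z : Conf d (~: A))
  : Idx n d :=
  [ffun k => (if k \in A as b return (k \in A = b -> 'I_d)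
              then fun h => x (exist _ k h)
              else fun h => z (exist _ k (in_setC_of_false h))) (erefl _)].

Definition restr (n d : nat) (A : {set 'I_n}) (x : Idx n d) : Conf d A :=
  [ffun k => x (val k)].

(* operators on (C^d)^{⊗n} are given by their matrix entries <x|rho|y> *)
Definition op (R : rcfType) (n d : nat) := Idx n d -> Idx n d -> R[i].

Definition ptrace (R : rcfType) (n d : nat) (A : {set 'I_n}) (rho : op R n d)
  (x y : Conf d A) : R[i] :=
  \sum_(z : Conf d (~: A)) rho (glue x z) (glue y z).

Definition hermitian (R : rcfType) (d : nat) (M : 'M[R[i]]_d) : Prop :=
  map_mx (fun c => c^*) M^T = M.

Definition gellmann_basis (R : rcfType) (d : nat)
  (lam : 'I_(d ^ 2 - 1) -> 'M[R[i]]_d) : Prop :=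
  (forall i, hermitian (lam i)) /\
  (forall i, \tr (lam i) = 0) /\
  (forall i j, \tr (lam i *m lam j) = (d * (i == j))%:R).

(* ||tau_alpha(rho)||^2 =
   sum_{(i_k)_{k in alpha}} (Tr[rho_alpha (⊗_{k in alpha} lam_{i_k})])^2 *)
Definition tau2 (R : rcfType) (n d : nat) (lam : 'I_(d ^ 2 - 1) -> 'M[R[i]]_d)
  (A : {set 'I_n}) (rho : op R n d) : R[i] :=
  \sum_(ii : {ffun {k : 'I_n | k \in A} -> 'I_(d ^ 2 - 1)})
    (\sum_(x : Conf d A) \sum_(y : Conf d A)
        ptrace rho x y * \prod_(k : {k : 'I_n | k \in A}) lam (ii k) (y k) (x k))
    ^+ 2.

Definition Cx (R : rcfType) (n d : nat) (lam : 'I_(d ^ 2 - 1) -> 'M[R[i]]_d)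
  (x : R) (rho : op R n d) : R[i] :=
  \sum_(A : {set 'I_n} | (A != set0) && (x <= (#|A|%:R : R)))
    tau2 lam A rho.

Definition product_vec (R : rcfType) (n d : nat) (psi : Idx n d -> R[i]) : Prop :=
  exists B : {set 'I_n}, [/\ B != set0, ~: B != set0 &
    exists (f : Conf d B -> R[i]) (g : Conf d (~: B) -> R[i]),
      forall x, psi x = f (restr B x) * g (restr (~: B) x)].

Definition biseparable (R : rcfType) (n d : nat) (rho : op R n d) : Prop :=
  exists (m : nat) (p : 'I_m -> R[i]) (psi : 'I_m -> Idx n d -> R[i]),
    [/\ (forall j, 0 <= p j), \sum_j p j = 1,
        (forall j, \sum_x `|psi j x| ^+ 2 = 1),
        (forall j, product_vec (psi j)) &
        (forall x y, rho x y = \sum_j p j * psi j x * (psi j y)^*)].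

(* Let psi be a pure state that is a product across a bipartition, and let S be the
   smaller side, so |S| <= n/2 and no alpha with |alpha| >= n/2 + 1 lies inside S.
   Completeness of {1, lambda_1, ..., lambda_(d^2-1)} gives, for every T,
     sum_(alpha subset of T) ||tau_alpha||^2 = d^|T| Tr rho_T^2   (with ||tau_empty||^2 = 1),
   hence C_(n/2+1)(psi) <= sum_(alpha not subset of S) ||tau_alpha||^2
                        = d^n Tr rho^2 - d^|S| Tr rho_S^2 = d^n - d^|S| <= d^n - d,
   both rho and rho_S being pure. Each ||tau_alpha||^2 is a sum of squares of real linear
   functionals of rho, hence convex, so the bound passes to biseparable mixtures. *)

From HB Require Import structures.
From mathcomp Require Import all_boot all_order all_algebra.
From mathcomp Require Import complex.
From mathcomp Require Import ring lra zify.
Set Implicit Arguments. Unset Strict Implicit. Unset Printing Implicit Defensive.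
Import Order.TTheory GRing.Theory Num.Theory.
Local Open Scope ring_scope.

Section Glue.
Variables (n d : nat) (A : {set 'I_n}).

Lemma glue_in (x : Conf d A) (z : Conf d (~: A)) (u : {k : 'I_n | k \in A}) :
  glue x z (val u) = x u.
Proof.
(* generalize the equation the dependent match is built on, then rewrite its right side *)
rewrite /glue ffunE; case: u => k kA /=; move: (erefl (k \in A)).
by rewrite {2 3}kA => e; congr (x _); apply: val_inj.
Qed.

Lemma glue_out (x : Conf d A) (z : Conf d (~: A)) (u : {k : 'I_n | k \in ~: A}) :
  glue x z (val u) = z u.
Proof.
rewrite /glue ffunE; case: u => k kA /=; move: (erefl (k \in A)).
have /negbTE nkA : k \notin A by rewrite -in_setC.
by rewrite {2 3}nkA => e; congr (z _); apply: val_inj.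
Qed.

Lemma restr_glue (x : Conf d A) (z : Conf d (~: A)) : restr A (glue x z) = x.
Proof. by apply/ffunP => u; rewrite ffunE glue_in. Qed.

Lemma restrC_glue (x : Conf d A) (z : Conf d (~: A)) : restr (~: A) (glue x z) = z.
Proof. by apply/ffunP => u; rewrite ffunE glue_out. Qed.

Lemma glue_restr (X : Idx n d) : glue (restr A X) (restr (~: A) X) = X.
Proof.
apply/ffunP => k; case: (boolP (k \in A)) => kA.
  by rewrite -[k]/(val (exist (fun k => k \in A) k kA)) glue_in ffunE.
have kCA : k \in ~: A by rewrite in_setC kA.
by rewrite -[k]/(val (exist (fun k => k \in ~: A) k kCA)) glue_out ffunE.
Qed.

Lemma sum_glue (V : zmodType) (F : Idx n d -> V) :
  \sum_X F X = \sum_(x : Conf d A) \sum_(z : Conf d (~: A)) F (glue x z).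
Proof.
rewrite pair_bigA (reindex (fun p : Conf d A * Conf d (~: A) => glue p.1 p.2)) //=.
exists (fun X => (restr A X, restr (~: A) X)) => [[x z] _|X _] /=.
  by rewrite restr_glue restrC_glue.
by rewrite glue_restr.
Qed.

End Glue.

Lemma mulmx1C_cast (F : fieldType) m p (e : m = p) (U : 'M[F]_(m, p)) (W : 'M_(p, m)) :
  U *m W = 1%:M -> W *m U = 1%:M.
Proof. by case: p / e U W => U W; apply: mulmx1C. Qed.

Lemma sum_mxvec_index (V : zmodType) m p (F : 'I_(m * p) -> V) :
  \sum_k F k = \sum_(i < m) \sum_(j < p) F (mxvec_index i j).
Proof.
rewrite pair_bigA (reindex (uncurry (@mxvec_index m p))) /=; last first.
  by have [g gK Kg] := curry_mxvec_bij m p; exists g => x _; [exact: gK | exact: Kg].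
by apply: eq_bigr => -[].
Qed.

Lemma eq_mxvec_index m p (i i' : 'I_m) (j j' : 'I_p) :
  (mxvec_index i j == mxvec_index i' j') = (i == i') && (j == j').
Proof.
by rewrite /mxvec_index (inj_eq (@cast_ord_inj _ _ _)) (inj_eq (@enum_rank_inj _)).
Qed.

Section Completeness.
Variables (R : rcfType) (d : nat) (lam : 'I_(d ^ 2 - 1) -> 'M[R[i]]_d).
Hypotheses (hlam : gellmann_basis lam) (d_gt0 : (0 < d)%N).

Definition gellmann_ext (mu : 'I_(1 + (d ^ 2 - 1))) : 'M[R[i]]_d :=
  if split mu is inr j then lam j else 1%:M.

Lemma gellmann_ext_conj mu a b : (gellmann_ext mu a b)^* = gellmann_ext mu b a.
Proof.
rewrite /gellmann_ext; case: (split mu) => [_|j].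
  by rewrite !mxE eq_sym; case: (_ == _); rewrite ?conjC1 ?conjC0.
by case: hlam => herm _; rewrite -[in RHS](herm j) !mxE.
Qed.

Lemma gellmann_ext_trace mu nu :
  \tr (gellmann_ext mu *m gellmann_ext nu) = (d * (mu == nu))%:R.
Proof.
case: hlam => _ [tr0 orth].
rewrite -(inj_eq (can_inj splitK)) /gellmann_ext.
case: (split mu) => [i|j]; case: (split nu) => [i'|j'] /=.
- by rewrite !ord1 eqxx mulmx1 mxtrace1 muln1.
- by rewrite mul1mx tr0 muln0.
- by rewrite mulmx1 tr0 muln0.
- exact: orth.
Qed.

Lemma gellmann_ext_completeness a b c e :
  \sum_mu gellmann_ext mu b a * gellmann_ext mu c e = (d * ((a == c) && (b == e)))%:R.
Proof.
pose U : 'M[R[i]]_(1 + (d ^ 2 - 1), d * d) :=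
  \matrix_(mu, k) mxvec (gellmann_ext mu) 0 k.
pose W : 'M[R[i]]_(d * d, 1 + (d ^ 2 - 1)) := \matrix_(k, mu) (d%:R^-1 * (U mu k)^*).
have d_neq0 : (d%:R : R[i]) != 0 by rewrite pnatr_eq0 -lt0n.
have UW : U *m W = 1%:M.
  apply/matrixP => mu nu; rewrite !mxE sum_mxvec_index.
  transitivity (d%:R^-1 * \tr (gellmann_ext mu *m gellmann_ext nu)).
    rewrite /mxtrace mulr_sumr; apply: eq_bigr => a' _.
    rewrite mxE mulr_sumr; apply: eq_bigr => b' _.
    by rewrite !mxE !mxvecE gellmann_ext_conj mulrCA.
  by rewrite gellmann_ext_trace natrM; case: (mu == nu); rewrite ?mulr1 ?mulr0 ?mulVf.
have dim_ext : (1 + (d ^ 2 - 1) = d * d)%N by rewrite subnKC ?expn_gt0 ?d_gt0 // -mulnn.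
move/matrixP: (mulmx1C_cast dim_ext UW) => /(_ (mxvec_index a b) (mxvec_index c e)).
rewrite !mxE eq_mxvec_index => /(congr1 (fun x => d%:R * x)).
rewrite mulr_sumr natrM => <-; apply: eq_bigr => mu _.
by rewrite !mxE !mxvecE gellmann_ext_conj mulrA mulrA mulfV // mul1r.
Qed.

Lemma gellmann_completeness a b c e :
  \sum_j lam j b a * lam j c e =
    (d * ((a == c) && (b == e)))%:R - ((a == b) && (c == e))%:R.
Proof.
rewrite -gellmann_ext_completeness big_split_ord /= big_ord1.
rewrite /gellmann_ext (unsplitK (inl _ : 'I_1 + 'I_(d ^ 2 - 1))) !mxE (eq_sym b a).
rewrite -mulnb natrM addrC addrK; apply: eq_bigr => j _.
by rewrite (unsplitK (inr _ : 'I_1 + 'I_(d ^ 2 - 1))).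
Qed.

End Completeness.

Lemma exchange_big4 (V : zmodType) (I J K L M : finType)
    (F : I -> J -> K -> L -> M -> V) :
  \sum_i \sum_j \sum_k \sum_l \sum_m F i j k l m =
  \sum_j \sum_k \sum_l \sum_m \sum_i F i j k l m.
Proof.
rewrite exchange_big; apply: eq_bigr => j _; rewrite exchange_big.
apply: eq_bigr => k _; rewrite exchange_big; apply: eq_bigr => l _.
by rewrite exchange_big.
Qed.

Lemma sqr_sum2 (V : comNzRingType) (I J : finType) (F : I -> J -> V) :
  (\sum_i \sum_j F i j) ^+ 2 = \sum_i \sum_j \sum_i' \sum_j' F i j * F i' j'.
Proof.
rewrite expr2 mulr_suml; apply: eq_bigr => i _; rewrite mulr_suml.
by apply: eq_bigr => j _; rewrite mulr_sumr; apply: eq_bigr => i' _; rewrite mulr_sumr.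
Qed.

Lemma sum_mul_eq (V : nzRingType) (I : finType) (z : I) (F : I -> V) :
  \sum_w F w * (z == w)%:R = F z.
Proof.
rewrite (bigD1 z) //= eqxx mulr1 big1 ?addr0 // => w.
by rewrite eq_sym => /negbTE ->; rewrite mulr0.
Qed.

Lemma sum2_swap_eq (V : nzRingType) (T : finType) (F : T -> T -> V) (x y : T) :
  \sum_x' \sum_y' F x' y' * ((x == y') && (y == x'))%:R = F y x.
Proof.
under eq_bigr do under eq_bigr do rewrite -mulnb natrM mulrA.
by under eq_bigr do rewrite -mulr_suml sum_mul_eq; rewrite sum_mul_eq.
Qed.

Lemma prod_nat_bool (V : comNzRingType) (I : finType) (P : pred I) :
  \prod_u ((P u)%:R : V) = ([forall u, P u])%:R.
Proof.
case: (boolP [forall u, P u]) => [/forallP allP | /forallPn [u /negbTE Pu]].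
  by rewrite big1 // => u _; rewrite allP.
by rewrite (bigD1 u) //= Pu mul0r.
Qed.

Lemma prod_eq2_nat (V : comNzRingType) (I T : finType) (f g f' g' : {ffun I -> T}) :
  \prod_u (((f u == g u) && (f' u == g' u))%:R : V) = ((f == g) && (f' == g'))%:R.
Proof.
rewrite prod_nat_bool; congr (nat_of_bool _)%:R.
apply/forallP/andP => [fg | [/eqP -> /eqP ->] u]; last by rewrite !eqxx.
by split; apply/eqP/ffunP => u; case/andP: (fg u) => /eqP ? /eqP.
Qed.

Lemma prod_natM_const (V : comNzRingType) (I : finType) (c : nat) (b : I -> bool) :
  \prod_u ((c * b u)%:R : V) = c%:R ^+ #|I| * \prod_u (b u)%:R.
Proof. by rewrite -prodr_const -big_split; apply: eq_bigr => u _; rewrite natrM. Qed.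

Lemma prod_setC_split (V : comNzRingType) (I : finType) (A : {set I}) (H : I -> V) :
  \prod_k H k = \prod_(u : {k | k \in A}) H (val u) * \prod_(u : {k | k \in ~: A}) H (val u).
Proof.
rewrite (bigID (mem A)) /= -!big_sub; congr (_ * _).
by apply: eq_bigl => k; rewrite in_setC.
Qed.

Section Kernel.
Variables (R : rcfType) (n d : nat).
Local Notation C := R[i].

(* [bloch_kernel true x y x' y'] is [\sum_j lam_j(y,x) lam_j(y',x')] by completeness,
   [bloch_kernel false] is the term of [lam_0 = 1]; their sum is [d] times the swap. *)
Definition bloch_kernel (b : bool) (x y x' y' : 'I_d) : C :=
  if b then (d * ((x == y') && (y == x')))%:R - ((x == y) && (y' == x'))%:R
  else ((x == y) && (y' == x'))%:R.

Lemma bloch_kernel_sum x y x' y' :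
  bloch_kernel false x y x' y' + bloch_kernel true x y x' y' =
  (d * ((x == y') && (y == x')))%:R.
Proof. by rewrite addrC subrK. Qed.

Lemma tau2_kernelE (lam : 'I_(d ^ 2 - 1) -> 'M[C]_d) (A : {set 'I_n}) (rho : op R n d) :
  gellmann_basis lam -> (0 < d)%N ->
  tau2 lam A rho = \sum_(x : Conf d A) \sum_(y : Conf d A) \sum_(x' : Conf d A)
    \sum_(y' : Conf d A) ptrace rho x y * ptrace rho x' y' *
      \prod_u bloch_kernel true (x u) (y u) (x' u) (y' u).
Proof.
move=> hlam d_gt0; rewrite /tau2; under eq_bigr do rewrite sqr_sum2.
rewrite exchange_big4; do 4 (apply: eq_bigr => ? _).
rewrite (eq_bigr _ (fun ii _ => mulrACA _ _ _ _)).
under eq_bigr do rewrite -big_split /=.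
rewrite -mulr_sumr -(bigA_distr_bigA (fun u j => lam j _ _ * lam j _ _)) /=.
by congr (_ * _); apply: eq_bigr => u _; rewrite gellmann_completeness.
Qed.

End Kernel.

Section FullSpace.
Variables (R : rcfType) (n d : nat).
Local Notation C := R[i].
Local Notation kernel := (bloch_kernel R).

Lemma sum_eq_outside (A : {set 'I_n}) (F : Idx n d -> Idx n d -> C) :
  \sum_X \sum_Y F X Y * (restr (~: A) X == restr (~: A) Y)%:R =
  \sum_(x : Conf d A) \sum_(y : Conf d A) \sum_(z : Conf d (~: A)) F (glue x z) (glue y z).
Proof.
rewrite (sum_glue A); apply: eq_bigr => x _.
under eq_bigr do rewrite (sum_glue A).
rewrite exchange_big; apply: eq_bigr => y _; apply: eq_bigr => z _.
by under eq_bigr do rewrite !restrC_glue; rewrite sum_mul_eq.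
Qed.

Lemma sum_ptrace (A : {set 'I_n}) (rho : op R n d) (H : Conf d A -> Conf d A -> C) :
  \sum_X \sum_Y rho X Y * H (restr A X) (restr A Y) * (restr (~: A) X == restr (~: A) Y)%:R =
  \sum_x \sum_y ptrace rho x y * H x y.
Proof.
rewrite sum_eq_outside; apply: eq_bigr => x _; apply: eq_bigr => y _.
by rewrite /ptrace mulr_suml; apply: eq_bigr => z _; rewrite !restr_glue.
Qed.

Lemma sum4_ptrace (A : {set 'I_n}) (rho : op R n d)
    (Q : Conf d A -> Conf d A -> Conf d A -> Conf d A -> C) :
  \sum_X \sum_Y \sum_X' \sum_Y' rho X Y * rho X' Y' *
    (Q (restr A X) (restr A Y) (restr A X') (restr A Y') *
     ((restr (~: A) X == restr (~: A) Y)%:R * (restr (~: A) X' == restr (~: A) Y')%:R)) =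
  \sum_x \sum_y \sum_x' \sum_y' ptrace rho x y * ptrace rho x' y' * Q x y x' y'.
Proof.
transitivity (\sum_X \sum_Y rho X Y * (\sum_X' \sum_Y' rho X' Y' *
    Q (restr A X) (restr A Y) (restr A X') (restr A Y') *
    (restr (~: A) X' == restr (~: A) Y')%:R) * (restr (~: A) X == restr (~: A) Y)%:R).
  do 2 (apply: eq_bigr => ? _); rewrite mulr_sumr mulr_suml; apply: eq_bigr => ? _.
  by rewrite mulr_sumr mulr_suml; apply: eq_bigr => ? _; ring.
under eq_bigr do under eq_bigr do rewrite sum_ptrace.
rewrite (sum_ptrace rho (fun x y => \sum_x' \sum_y' ptrace rho x' y' * Q x y x' y')).
do 2 (apply: eq_bigr => ? _); rewrite mulr_sumr; apply: eq_bigr => ? _.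
by rewrite mulr_sumr; apply: eq_bigr => ? _; ring.
Qed.

Lemma prod_kernel_split (A : {set 'I_n}) (X Y X' Y' : Idx n d) :
  \prod_k kernel (k \in A) (X k) (Y k) (X' k) (Y' k) =
  \prod_u kernel true (restr A X u) (restr A Y u) (restr A X' u) (restr A Y' u) *
  ((restr (~: A) X == restr (~: A) Y)%:R * (restr (~: A) X' == restr (~: A) Y')%:R).
Proof.
rewrite (prod_setC_split A); congr (_ * _).
  by apply: eq_bigr => -[k kA] _; rewrite !ffunE /= kA.
rewrite -natrM mulnb -prod_eq2_nat; apply: eq_bigr => -[k kCA] _.
have /negbTE kA : k \notin A by rewrite -in_setC.
by rewrite !ffunE /= kA /bloch_kernel (eq_sym (Y' k)).
Qed.

(* [tau2] rewritten on the full index space: the sites outside [A] are traced out by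
   [bloch_kernel false], so that the sum over subsets [A] can be carried out sitewise. *)
Definition tau2_full (A : {set 'I_n}) (rho : op R n d) : C :=
  \sum_X \sum_Y \sum_X' \sum_Y' rho X Y * rho X' Y' *
    \prod_k kernel (k \in A) (X k) (Y k) (X' k) (Y' k).

Lemma tau2_fullE (lam : 'I_(d ^ 2 - 1) -> 'M[C]_d) (A : {set 'I_n}) (rho : op R n d) :
  gellmann_basis lam -> (0 < d)%N -> tau2 lam A rho = tau2_full A rho.
Proof.
move=> hlam d_gt0; rewrite (tau2_kernelE _ _ hlam d_gt0) -sum4_ptrace.
by do 4 (apply: eq_bigr => ? _); rewrite prod_kernel_split.
Qed.

Lemma sum_subset_tau2_full (S : {set 'I_n}) (rho : op R n d) :
  \sum_(A : {set 'I_n} | A \subset S) tau2_full A rho =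
  \sum_X \sum_Y \sum_X' \sum_Y' rho X Y * rho X' Y' *
    \prod_k (kernel false (X k) (Y k) (X' k) (Y' k) +
             (k \in S)%:R * kernel true (X k) (Y k) (X' k) (Y' k)).
Proof.
under [RHS]eq_bigr do under eq_bigr do under eq_bigr do under eq_bigr do
  rewrite (eq_bigr _ (fun k _ => addrC _ _)) bigA_distr mulr_sumr.
rewrite -[RHS]exchange_big4 big_mkcond /=; apply: eq_bigr => A _.
case: ifPn => AS.
  do 4 (apply: eq_bigr => ? _); congr (_ * _); apply: eq_bigr => k _.
  by case: (boolP (k \in A)) => // kA; rewrite (subsetP AS k kA) mul1r.
have /subsetPn [k kA kS] := AS.
by symmetry; do 4 (apply: big1 => ? _); rewrite (bigD1 k) //= kA (negbTE kS) !mul0r mulr0.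
Qed.

End FullSpace.

Section Purity.
Variables (R : rcfType) (n d : nat) (lam : 'I_(d ^ 2 - 1) -> 'M[R[i]]_d).
Hypotheses (hlam : gellmann_basis lam) (d_gt0 : (0 < d)%N).

Lemma sum_tau2 (rho : op R n d) :
  \sum_(A : {set 'I_n}) tau2 lam A rho = d%:R ^+ n * \sum_X \sum_Y rho X Y * rho Y X.
Proof.
rewrite (eq_bigr _ (fun A _ => tau2_fullE A rho hlam d_gt0)).
rewrite -(eq_bigl _ _ (fun A => subsetT A)) sum_subset_tau2_full.
rewrite mulr_sumr; apply: eq_bigr => X _; rewrite mulr_sumr; apply: eq_bigr => Y _.
rewrite -(sum2_swap_eq (fun X' Y' => d%:R ^+ n * (rho X Y * rho X' Y')) X Y).
apply: eq_bigr => X' _; apply: eq_bigr => Y' _.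
under eq_bigr do rewrite inE mul1r bloch_kernel_sum.
rewrite prod_natM_const card_ord (prod_eq2_nat _ (X : {ffun _ -> _})).
by rewrite mulrCA mulrA.
Qed.

Lemma sum_subset_tau2 (S : {set 'I_n}) (rho : op R n d) :
  \sum_(A : {set 'I_n} | A \subset S) tau2 lam A rho =
  d%:R ^+ #|S| * \sum_(x : Conf d S) \sum_(y : Conf d S) ptrace rho x y * ptrace rho y x.
Proof.
rewrite (eq_bigr _ (fun A _ => tau2_fullE A rho hlam d_gt0)) sum_subset_tau2_full.
transitivity (\sum_(x : Conf d S) \sum_(y : Conf d S) \sum_x' \sum_y'
    ptrace rho x y * ptrace rho x' y' * (d%:R ^+ #|S| * ((x == y') && (y == x'))%:R));
  last first.
  rewrite mulr_sumr; apply: eq_bigr => x _; rewrite mulr_sumr; apply: eq_bigr => y _.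
  rewrite -(sum2_swap_eq (fun x' y' => d%:R ^+ #|S| * (ptrace rho x y * ptrace rho x' y')) x y).
  by do 2 (apply: eq_bigr => ? _); rewrite mulrA (mulrC (ptrace rho x y * _)).
rewrite -(sum4_ptrace rho (fun x y x' y' => d%:R ^+ #|S| * ((x == y') && (y == x'))%:R)).
apply: eq_bigr => X _; apply: eq_bigr => Y _; apply: eq_bigr => X' _; apply: eq_bigr => Y' _.
congr (_ * _); rewrite (prod_setC_split S); congr (_ * _).
  rewrite -card_sig -prod_eq2_nat -prod_natM_const; apply: eq_bigr => -[k kS] _.
  by rewrite !ffunE /= kS mul1r bloch_kernel_sum.
rewrite -natrM mulnb -prod_eq2_nat; apply: eq_bigr => -[k kCS] _.
have /negbTE kS : k \notin S by rewrite -in_setC.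
by rewrite !ffunE /= kS mul0r addr0 /bloch_kernel (eq_sym (Y' k)).
Qed.

End Purity.

Lemma jensen_sqr (F : numDomainType) (I : finType) (p a : I -> F) :
  (forall j, 0 <= p j) -> \sum_j p j = 1 -> (forall j, a j \is Num.real) ->
  (\sum_j p j * a j) ^+ 2 <= \sum_j p j * a j ^+ 2.
Proof.
move=> p_ge0 p_sum a_real; set m := \sum_j p j * a j.
have m_real : m \is Num.real.
  by apply: rpred_sum => j _; apply: realM; [exact: ger0_real | exact: a_real].
have : 0 <= \sum_j p j * (a j - m) ^+ 2.
  by apply: sumr_ge0 => j _; rewrite mulr_ge0 // real_exprn_even_ge0 // rpredB.
have -> : \sum_j p j * (a j - m) ^+ 2 =
    \sum_j p j * a j ^+ 2 - 2 * m * m + m ^+ 2 * \sum_j p j.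
  transitivity (\sum_j (p j * a j ^+ 2 - 2 * m * (p j * a j) + m ^+ 2 * p j)).
    by apply: eq_bigr => j _; ring.
  by rewrite big_split sumrB /= -!mulr_sumr.
by rewrite p_sum mulr1 -subr_ge0; congr (0 <= _); ring.
Qed.

Section Convexity.
Variables (R : rcfType) (n d : nat) (lam : 'I_(d ^ 2 - 1) -> 'M[R[i]]_d).
Hypothesis hlam : gellmann_basis lam.
Local Notation C := R[i].
Local Notation coord_index A := {ffun {k : 'I_n | k \in A} -> 'I_(d ^ 2 - 1)}.

Definition selfadjoint (rho : op R n d) : Prop := forall X Y, (rho X Y)^* = rho Y X.

Definition bloch_coord (A : {set 'I_n}) (rho : op R n d) (ii : coord_index A) : C :=
  \sum_(x : Conf d A) \sum_(y : Conf d A)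
    ptrace rho x y * \prod_(k : {k : 'I_n | k \in A}) lam (ii k) (y k) (x k).

Lemma tau2_bloch_coord (A : {set 'I_n}) (rho : op R n d) :
  tau2 lam A rho = \sum_(ii : coord_index A) bloch_coord rho ii ^+ 2.
Proof. by []. Qed.

Lemma bloch_coord_real (A : {set 'I_n}) (rho : op R n d) (ii : coord_index A) :
  selfadjoint rho -> bloch_coord rho ii \is Num.real.
Proof.
move=> rho_sa; rewrite CrealE; apply/eqP.
rewrite /bloch_coord rmorph_sum exchange_big; apply: eq_bigr => y _.
rewrite rmorph_sum; apply: eq_bigr => x _; rewrite rmorphM rmorph_prod; congr (_ * _).
  by rewrite /ptrace rmorph_sum; apply: eq_bigr => z _; apply: rho_sa.
apply: eq_bigr => k _; case: hlam => herm _.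
by rewrite -[in RHS](herm (ii k)) !mxE.
Qed.

Lemma bloch_coord_mix (A : {set 'I_n}) m (p : 'I_m -> C) (rhos : 'I_m -> op R n d)
    (rho : op R n d) (ii : coord_index A) :
  (forall X Y, rho X Y = \sum_j p j * rhos j X Y) ->
  bloch_coord rho ii = \sum_j p j * bloch_coord (rhos j) ii.
Proof.
move=> rhoE; rewrite /bloch_coord.
under [RHS]eq_bigr do rewrite mulr_sumr; rewrite [RHS]exchange_big; apply: eq_bigr => x _.
under [RHS]eq_bigr do rewrite mulr_sumr; rewrite [RHS]exchange_big; apply: eq_bigr => y _.
rewrite /ptrace mulr_suml; under [RHS]eq_bigr do rewrite mulr_suml mulr_sumr.
rewrite [RHS]exchange_big; apply: eq_bigr => z _.
by rewrite rhoE mulr_suml; apply: eq_bigr => j _; rewrite mulrA.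
Qed.

Lemma tau2_ge0 (A : {set 'I_n}) (rho : op R n d) : selfadjoint rho -> 0 <= tau2 lam A rho.
Proof.
move=> rho_sa; rewrite tau2_bloch_coord; apply: sumr_ge0 => ii _.
exact: real_exprn_even_ge0 (bloch_coord_real ii rho_sa) _.
Qed.

Lemma tau2_convex (A : {set 'I_n}) m (p : 'I_m -> C) (rhos : 'I_m -> op R n d)
    (rho : op R n d) :
  (forall j, 0 <= p j) -> \sum_j p j = 1 -> (forall j, selfadjoint (rhos j)) ->
  (forall X Y, rho X Y = \sum_j p j * rhos j X Y) ->
  tau2 lam A rho <= \sum_j p j * tau2 lam A (rhos j).
Proof.
move=> p_ge0 p_sum rhos_sa rhoE.
under eq_bigr do rewrite tau2_bloch_coord mulr_sumr.
rewrite tau2_bloch_coord exchange_big; apply: ler_sum => ii _.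
rewrite (bloch_coord_mix _ rhoE); apply: jensen_sqr => // j.
exact: bloch_coord_real.
Qed.

Lemma Cx_convex (t : R) m (p : 'I_m -> C) (rhos : 'I_m -> op R n d) (rho : op R n d) :
  (forall j, 0 <= p j) -> \sum_j p j = 1 -> (forall j, selfadjoint (rhos j)) ->
  (forall X Y, rho X Y = \sum_j p j * rhos j X Y) ->
  Cx lam t rho <= \sum_j p j * Cx lam t (rhos j).
Proof.
move=> p_ge0 p_sum rhos_sa rhoE; under eq_bigr do rewrite mulr_sumr.
rewrite exchange_big; apply: ler_sum => A _; exact: tau2_convex.
Qed.

End Convexity.

Section PureStates.
Variables (R : rcfType) (n d : nat).
Local Notation C := R[i].

Definition pure_op (psi : Idx n d -> C) : op R n d := fun X Y => psi X * (psi Y)^*.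

Lemma pure_op_selfadjoint psi : selfadjoint (pure_op psi).
Proof. by move=> X Y; rewrite /pure_op rmorphM /= conjCK mulrC. Qed.

Lemma pure_op_purity psi :
  \sum_X \sum_Y pure_op psi X Y * pure_op psi Y X = (\sum_X `|psi X| ^+ 2) ^+ 2.
Proof.
rewrite expr2 mulr_suml; apply: eq_bigr => X _; rewrite mulr_sumr.
by apply: eq_bigr => Y _; rewrite /pure_op !normCK; ring.
Qed.

Lemma product_pure_ptrace_purity psi (S : {set 'I_n})
    (f : Conf d S -> C) (g : Conf d (~: S) -> C) :
  (forall X, psi X = f (restr S X) * g (restr (~: S) X)) ->
  \sum_(x : Conf d S) \sum_(y : Conf d S) ptrace (pure_op psi) x y * ptrace (pure_op psi) y x =
  (\sum_X `|psi X| ^+ 2) ^+ 2.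
Proof.
move=> psiE; set Ng := \sum_z g z * (g z)^*.
have ptraceE x y : ptrace (pure_op psi) x y = f x * (f y)^* * Ng.
  rewrite /ptrace /Ng mulr_sumr; apply: eq_bigr => z _.
  by rewrite /pure_op !psiE !restr_glue !restrC_glue rmorphM; ring.
have -> : \sum_X `|psi X| ^+ 2 = (\sum_x f x * (f x)^*) * Ng.
  rewrite (sum_glue S) mulr_suml; apply: eq_bigr => x _; rewrite /Ng mulr_sumr.
  by apply: eq_bigr => z _; rewrite normCK psiE restr_glue restrC_glue rmorphM; ring.
rewrite exprMn expr2 !mulr_suml; apply: eq_bigr => x _; rewrite mulr_sumr mulr_suml.
by apply: eq_bigr => y _; rewrite !ptraceE; ring.
Qed.

End PureStates.

Lemma not_subset_small (R : realFieldType) n (A S : {set 'I_n}) :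
  (#|S| * 2 <= n)%N -> n%:R / 2 + 1 <= (#|A|%:R : R) -> ~~ (A \subset S).
Proof.
move=> S_small A_large; apply/negP => /subset_leq_card AS.
have : (#|A|%:R * 2 <= n%:R :> R).
  by rewrite -natrM ler_nat (leq_trans _ S_small) ?leq_mul2r ?AS ?orbT.
lra.
Qed.

Lemma in_setCC (T : finType) (B : {set T}) k : k \in B -> k \in ~: ~: B.
Proof. by rewrite setCK. Qed.

Definition conf_setCK n d (B : {set 'I_n}) (c : Conf d (~: ~: B)) : Conf d B :=
  [ffun u => c (exist _ (val u) (in_setCC (valP u)))].

Lemma conf_setCK_restr n d (B : {set 'I_n}) (X : Idx n d) :
  conf_setCK (restr (~: ~: B) X) = restr B X.
Proof. by apply/ffunP => u; rewrite !ffunE. Qed.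

Section Bound.
Variables (R : rcfType) (n d : nat) (lam : 'I_(d ^ 2 - 1) -> 'M[R[i]]_d).
Hypotheses (hlam : gellmann_basis lam) (d_gt0 : (0 < d)%N).
Local Notation C := R[i].

Lemma product_pure_Cx_bound_small (psi : Idx n d -> C) (S : {set 'I_n})
    (f : Conf d S -> C) (g : Conf d (~: S) -> C) :
  (0 < #|S|)%N -> (#|S| * 2 <= n)%N ->
  (forall X, psi X = f (restr S X) * g (restr (~: S) X)) ->
  \sum_X `|psi X| ^+ 2 = 1 ->
  Cx lam (n%:R / 2 + 1) (pure_op psi) <= d%:R ^+ n - d%:R.
Proof.
move=> S_gt0 S_small psiE psi_norm.
have psi_sa := pure_op_selfadjoint psi.
apply: (@le_trans _ _ (\sum_(A : {set 'I_n} | ~~ (A \subset S)) tau2 lam A (pure_op psi))).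
  rewrite /Cx [leLHS]big_mkcond [leRHS]big_mkcond /=; apply: ler_sum => A _.
  case: ifP => [/andP [_ A_large] | _]; first by rewrite (not_subset_small S_small A_large).
  by case: ifP => _ //; apply: tau2_ge0.
have -> : \sum_(A : {set 'I_n} | ~~ (A \subset S)) tau2 lam A (pure_op psi) =
    \sum_A tau2 lam A (pure_op psi) - \sum_(A : {set 'I_n} | A \subset S) tau2 lam A (pure_op psi).
  by rewrite [X in _ = X - _](bigID (fun A : {set 'I_n} => A \subset S)) /= addrC addrK.
rewrite sum_tau2 // sum_subset_tau2 // pure_op_purity (product_pure_ptrace_purity psiE).
rewrite psi_norm expr1n !mulr1 lerB // -natrX ler_nat.
by rewrite -{1}(expn1 d) leq_pexp2l.
Qed.

Lemma product_pure_Cx_bound (psi : Idx n d -> C) :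
  product_vec psi -> \sum_X `|psi X| ^+ 2 = 1 ->
  Cx lam (n%:R / 2 + 1) (pure_op psi) <= d%:R ^+ n - d%:R.
Proof.
move=> [B [B_neq0 CB_neq0 [f [g psiE]]]] psi_norm.
have := cardsC B; rewrite card_ord; move: B_neq0 CB_neq0; rewrite -!card_gt0 => B_gt0 CB_gt0 nE.
have [B_small | CB_small] := leqP #|B| #|~: B|.
  by apply: (product_pure_Cx_bound_small (f := f) (g := g)) => //; lia.
apply: (product_pure_Cx_bound_small (f := g) (g := fun c => f (conf_setCK c))) => //; first by lia.
by move=> X; rewrite conf_setCK_restr psiE mulrC.
Qed.

End Bound.

Unset Implicit Arguments.
Set Strict Implicit.

Theorem corollary1 (R : rcfType) (n d : nat) (hn : (2 <= n)%N) (hd : (2 <= d)%N)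
  (lam : 'I_(d ^ 2 - 1) -> 'M[R[i]]_d) (hlam : gellmann_basis lam)
  (rho : op R n d) (hrho : biseparable rho) :
  Cx lam (n%:R / 2 + 1) rho <= (d%:R ^+ n - d%:R : R[i]).
Proof.
have d_gt0 : (0 < d)%N by apply: leq_trans hd.
case: hrho => m [p [psi [p_ge0 p_sum psi_norm psi_prod rhoE]]].
have rho_mix X Y : rho X Y = \sum_j p j * pure_op (psi j) X Y.
  by rewrite rhoE; apply: eq_bigr => j _; rewrite /pure_op mulrA.
apply: le_trans (Cx_convex hlam _ p_ge0 p_sum (fun j => pure_op_selfadjoint _) rho_mix) _.
apply: le_trans (_ : _ <= \sum_j p j * (d%:R ^+ n - d%:R)) _.
  apply: ler_sum => j _; rewrite ler_wpM2l //.
  exact: (product_pure_Cx_bound hlam d_gt0 (psi_prod j) (psi_norm j)).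
by rewrite -mulr_suml p_sum mul1r.
Qed.
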